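(* Let $n\ge1$ and $a,b>0$. Define $X_1=\frac{\arctan\sqrt{b/a}}{\sqrt{ab}}$, $X_2=\frac{1}{2a(a+b)}$, and $X_n=\left(\frac{\partial}{\partial a}\right)^{m-1}\left(\frac{\partial}{\partial b}\right)^{m-1}X_1$ if $n=2m-1$ ($m\ge1$), $X_n=\left(\frac{\partial}{\partial a}\right)^{m-2}\left(\frac{\partial}{\partial b}\right)^{m-2}X_2$ if $n=2m-2$ ($m\ge2$). Then: if $n=2m-1$, $$X_n=\frac{(2m-2)!\,(2m-3)!!}{(2m-2)!!\,(2^2ab)^{m-1}}\left\{\frac{\arctan\sqrt{b/a}}{\sqrt{ab}}+\sum_{k=1}^{m-1}\frac{(2k-2)!!\,(b-a)(2^2ab)^{k-1}}{(2k-1)!!\,(a+b)^{2k}}\right\};$$ if $n=2m-2$, $$X_n=\frac{(2m-3)!\,(2m-4)!!}{(2m-3)!!\,(2^2ab)^{m-2}}\left\{\frac{1}{2a(a+b)}+\sum_{k=2}^{m-1}\frac{(2k-3)!!\,(b-a)(2^2ab)^{k-2}}{(2k-2)!!\,(a+b)^{2k-1}}\right\}.$$ Consequently, for $x=(x_1,\dots,x_{n+1})\in\mathbf{R}^{n+1}$ with $r=\sqrt{\sum_{j=1}^{n+1}x_j^2}$ and $r>|x_{n+1}|$, the function $$f(r,x_{n+1})=\int_0^1\frac{2^nt^{n-1}}{\{r-x_{n+1}+t^2(r+x_{n+1})\}^n}\,dt$$ is given as follows: if $n=2m-1$, $$f(r,x_{n+1})=\frac{(2m-3)!!}{(2m-2)!!\,(r^2-x_{2m}^2)^{m-1}}\left\{\frac{2\arctan\sqrt{\frac{r+x_{2m}}{r-x_{2m}}}}{(r^2-x_{2m}^2)^{1/2}}+\sum_{k=1}^{m-1}\frac{(2k-2)!!\,x_{2m}(r^2-x_{2m}^2)^{k-1}}{(2k-1)!!\,r^{2k}}\right\};$$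 if $n=2m-2$, $$f(r,x_{n+1})=\frac{(2m-4)!!}{(2m-3)!!\,(r^2-x_{2m-1}^2)^{m-1}}\left\{1+\sum_{k=1}^{m-1}\frac{(2k-3)!!\,x_{2m-1}(r^2-x_{2m-1}^2)^{k-1}}{(2k-2)!!\,r^{2k-1}}\right\}.$$
   Context: Double factorials use the conventions $(-1)!!=0!!=1$. Empty sums are zero. Here $a=r-x_{n+1}$, $b=r+x_{n+1}$ relate the two parts of the statement, and $f(r,x_{n+1})=\frac{2^n}{(n-1)!}X_n$ evaluated at these $a,b$. *)

From Stdlib Require Import Reals ZArith Lra Lia.
From Coquelicot Require Import Coquelicot.
Open Scope R_scope.

Fixpoint dfact_nat (n : nat) : nat :=
  match n with
  | O => 1%nat
  | S O => 1%nat
  | S (S p) => (n * dfact_nat p)%nat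
  end.

(* double factorial on integers, as a real; convention (-1)!! = 1
   (negative arguments, of which only -1 occurs, give 1). *)
Definition dfact (z : Z) : R :=
  if (z <? 0)%Z then 1 else INR (dfact_nat (Z.to_nat z)).

Definition partial_ab (i j : nat) (g : R -> R -> R) (a b : R) : R :=
  Derive_n (fun a' => Derive_n (fun b' => g a' b') j b) i a.

Definition X1 (a b : R) : R := atan (sqrt (b / a)) / sqrt (a * b).
Definition X2 (a b : R) : R := 1 / (2 * a * (a + b)).

(* X_n : n = 2m-1 -> (d/da)^(m-1)(d/db)^(m-1) X1 ; n = 2m-2 -> (d/da)^(m-2)(d/db)^(m-2) X2 *)
Definition Xn (n : nat) (a b : R) : R :=
  if Nat.odd n then partial_ab ((n - 1) / 2) ((n - 1) / 2) X1 a b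
  else partial_ab ((n - 2) / 2) ((n - 2) / 2) X2 a b.

Definition f_int (n : nat) (r xl : R) : R :=
  RInt (fun t => 2 ^ n * t ^ (n - 1) / (r - xl + t ^ 2 * (r + xl)) ^ n) 0 1.

From Stdlib Require Import Reals ZArith Lra Lia.
From Coquelicot Require Import Coquelicot.
Open Scope R_scope.

(* With J p q a b = int_0^1 t^q / (a + b t^2)^p dt we have X1 = J 1 0 and X2 = J 2 1, and
   differentiating under the integral sign gives d/da J p q = - p J (p+1) q and
   d/db J p q = - p J (p+1) (q+2).  Hence X_n = (n-1)! K (n-1) with K n = J (n+1) n.
   An explicit primitive of the difference of the two integrands yields the recurrence
     4 a b (n+2) K (n+2) = (n+1) K n + (b - a) / (a + b)^(n+2),
   which unrolls to the closed forms; finally f(r, x_{n+1}) = 2^n K (n-1) at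
   a = r - x_{n+1}, b = r + x_{n+1}. *)

Lemma continuity_pt_ex_derive (h : R -> R) (v : R) : ex_derive h v -> continuity_pt h v.
Proof.
  intros H. apply continuity_pt_filterlim.
  exact (ex_derive_continuous (K := R_AbsRing) (V := R_NormedModule) h v H).
Qed.

Lemma locally_pos (x : R) : 0 < x -> locally x (fun y => 0 < y).
Proof. intros Hx. apply (locally_interval _ x 0 p_infty); simpl; auto. Qed.

Section PowInvIntegral.

Variables (p : nat) (w k c : R -> R).
Hypothesis w_derivable : forall v, ex_derive w v.
Hypothesis k_derivable : forall v, ex_derive k v.
Hypothesis c_derivable : forall v, ex_derive c v.
Hypothesis denom_pos : forall z v, 0 < z -> 0 < z * k v + c v.

Let F (z v : R) : R := w v / (z * k v + c v) ^ p.
Let dF (z v : R) : R := - INR p * k v * w v / (z * k v + c v) ^ S p.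

Lemma is_derive_pow_inv_integrand (z v : R) : 0 < z -> is_derive (fun u => F u v) z (dF z v).
Proof.
  intros Hz. specialize (denom_pos z v Hz). unfold F, dF.
  auto_derive; [apply pow_nonzero; lra|].
  destruct p as [|p']; [simpl; field; lra|].
  simpl pred. rewrite <- !tech_pow_Rmult. field. split; [apply pow_nonzero|]; lra.
Qed.

Lemma continuity_2d_pt_derive_pow_inv_integrand (x t : R) : 0 < x -> continuity_2d_pt dF x t.
Proof.
  intros Hx. unfold dF, Rdiv.
  assert (Hv : forall h, (forall v, ex_derive h v) -> continuity_2d_pt (fun _ v => h v) x t).
  { intros h Hh. apply (continuity_1d_2d_pt_comp h (fun _ v => v)).
    - apply continuity_pt_ex_derive, Hh.
    - apply continuity_2d_pt_id2. }
  apply continuity_2d_pt_mult.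
  - apply (Hv (fun v => - INR p * k v * w v)). intros v. auto_derive. auto.
  - apply continuity_2d_pt_inv.
    + apply (continuity_1d_2d_pt_comp (fun y => y ^ S p) (fun u v => u * k v + c v)).
      * apply continuity_pt_ex_derive. auto_derive. auto.
      * apply continuity_2d_pt_plus; [apply continuity_2d_pt_mult|].
        -- apply continuity_2d_pt_id1.
        -- apply Hv, k_derivable.
        -- apply Hv, c_derivable.
    + apply pow_nonzero. specialize (denom_pos x t Hx). lra.
Qed.

Lemma is_derive_RInt_pow_inv_param (x : R) : 0 < x ->
  is_derive (fun z => RInt (fun v => F z v) 0 1) x (RInt (fun v => dF x v) 0 1).
Proof.
  intros Hx.
  assert (HD : forall z v, 0 < z -> Derive (fun u => F u v) z = dF z v).
  { intros z v Hz. apply is_derive_unique, is_derive_pow_inv_integrand, Hz. }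
  rewrite <- (RInt_ext (fun v => Derive (fun u => F u v) x)) by (intros; apply HD, Hx).
  apply is_derive_RInt_param.
  - apply (filter_imp (fun y => 0 < y)); [|apply locally_pos, Hx].
    intros y Hy t _. eexists. apply is_derive_pow_inv_integrand, Hy.
  - intros t _. apply (continuity_2d_pt_ext_loc dF);
      [|apply continuity_2d_pt_derive_pow_inv_integrand, Hx].
    exists (mkposreal x Hx). simpl. intros u v Hu _.
    apply Rabs_def2 in Hu. symmetry. apply HD. lra.
  - apply (filter_imp (fun y => 0 < y)); [|apply locally_pos, Hx].
    intros y Hy. apply (ex_RInt_continuous (V := R_CompleteNormedModule)). intros v _.
    apply (ex_derive_continuous (K := R_AbsRing) (V := R_NormedModule)).
    specialize (denom_pos y v Hy). unfold F.
    auto_derive. repeat split; auto. apply pow_nonzero. lra.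
Qed.

End PowInvIntegral.

Definition J (p q : nat) (a b : R) : R := RInt (fun t => t ^ q / (a + b * t ^ 2) ^ p) 0 1.

Lemma ex_RInt_J_integrand p q a b : 0 < a -> 0 < b ->
  ex_RInt (fun t => t ^ q / (a + b * t ^ 2) ^ p) 0 1.
Proof.
  intros Ha Hb. apply (ex_RInt_continuous (V := R_CompleteNormedModule)). intros t _.
  apply (ex_derive_continuous (K := R_AbsRing) (V := R_NormedModule)).
  pose proof (pow2_ge_0 t).
  auto_derive. apply pow_nonzero. nra.
Qed.

Lemma RInt_scal_J_integrand p q a b l : 0 < a -> 0 < b ->
  RInt (fun t => l * (t ^ q / (a + b * t ^ 2) ^ p)) 0 1 = l * J p q a b.
Proof.
  intros Ha Hb.
  exact (RInt_scal (V := R_CompleteNormedModule) _ 0 1 l (ex_RInt_J_integrand p q a b Ha Hb)).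
Qed.

Lemma is_derive_J_a p q a b : 0 < a -> 0 < b ->
  is_derive (fun a' => J p q a' b) a (- INR p * J (S p) q a b).
Proof.
  intros Ha Hb. unfold J at 1.
  apply (is_derive_ext (fun z => RInt (fun t => t ^ q / (z * 1 + b * t ^ 2) ^ p) 0 1)).
  { intros z. apply RInt_ext. intros t _. rewrite Rmult_1_r. reflexivity. }
  rewrite <- RInt_scal_J_integrand by auto.
  erewrite RInt_ext.
  - apply (is_derive_RInt_pow_inv_param p (fun t => t ^ q) (fun _ => 1) (fun t => b * t ^ 2));
      auto; intros; try (auto_derive; auto).
    pose proof (pow2_ge_0 v). nra.
  - intros t _.
    (* [RInt_ext] states the equation in a normed module; [ring] needs it at type [R] *)
    change (?l = ?w) with (l = w :> R). rewrite !Rmult_1_r. unfold Rdiv. ring.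
Qed.

Lemma is_derive_J_b p q a b : 0 < a -> 0 < b ->
  is_derive (fun b' => J p q a b') b (- INR p * J (S p) (q + 2) a b).
Proof.
  intros Ha Hb. unfold J at 1.
  apply (is_derive_ext (fun z => RInt (fun t => t ^ q / (z * t ^ 2 + a) ^ p) 0 1)).
  { intros z. apply RInt_ext. intros t _. rewrite Rplus_comm, Rmult_comm. reflexivity. }
  rewrite <- RInt_scal_J_integrand by auto.
  erewrite RInt_ext.
  - apply (is_derive_RInt_pow_inv_param p (fun t => t ^ q) (fun t => t ^ 2) (fun _ => a));
      auto; intros; try (auto_derive; auto).
    pose proof (pow2_ge_0 v). nra.
  - intros t _. change (?l = ?w) with (l = w :> R).
    rewrite pow_add, (Rplus_comm a), (Rmult_comm b). unfold Rdiv. ring.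
Qed.

Fixpoint signed_rising (p j : nat) : R :=
  match j with O => 1 | S j => signed_rising p j * - INR (p + j) end.

Lemma signed_rising_add p i j : signed_rising p (j + i) = signed_rising p j * signed_rising (p + j) i.
Proof.
  induction i as [|i IH]; simpl.
  - rewrite Nat.add_0_r. ring.
  - rewrite Nat.add_succ_r. simpl. rewrite IH, Nat.add_assoc. ring.
Qed.

Lemma fact_signed_rising p n : INR (fact p) * signed_rising (S p) n = (-1) ^ n * INR (fact (p + n)).
Proof.
  induction n as [|n IH]; simpl signed_rising.
  - rewrite Nat.add_0_r. ring.
  - rewrite <- Rmult_assoc, IH, Nat.add_succ_r, fact_simpl, mult_INR. simpl. ring.
Qed.

Lemma Derive_n_signed_rising (G : nat -> R -> R) (p : nat) :
  (forall n y, 0 < y -> is_derive (G n) y (- INR (p + n) * G (S n) y)) ->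
  forall j y, 0 < y -> Derive_n (G O) j y = signed_rising p j * G j y.
Proof.
  intros HG j. induction j as [|j IH]; intros y Hy; simpl.
  - ring.
  - rewrite (Derive_ext_loc _ (fun z => signed_rising p j * G j z)).
    + apply is_derive_unique. rewrite Rmult_assoc. apply is_derive_scal, HG, Hy.
    + apply (filter_imp (fun z => 0 < z)); [|apply locally_pos, Hy]. exact IH.
Qed.

Lemma partial_ab_J (g : R -> R -> R) p q i j a b : 0 < a -> 0 < b ->
  (forall a' b', 0 < a' -> 0 < b' -> g a' b' = J p q a' b') ->
  partial_ab i j g a b = signed_rising p (j + i) * J (p + j + i) (q + 2 * j) a b.
Proof.
  intros Ha Hb Hg. unfold partial_ab.
  assert (Hb_n : forall a', 0 < a' ->
    Derive_n (fun b' => g a' b') j b = signed_rising p j * J (p + j) (q + 2 * j) a' b).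
  { intros a' Ha'.
    rewrite (Derive_n_ext_loc _ (fun b' => J p q a' b'));
      [|apply (filter_imp (fun z => 0 < z)); [intros; apply Hg|apply locally_pos]; auto].
    rewrite (Nat.add_comm p), (Nat.add_comm q).
    apply (Derive_n_signed_rising (fun n b' => J (n + p) (2 * n + q) a' b')); [|exact Hb].
    intros n y Hy. rewrite (Nat.add_comm p).
    replace (2 * S n + q)%nat with (2 * n + q + 2)%nat by lia.
    apply is_derive_J_b; auto. }
  rewrite (Derive_n_ext_loc _ (fun a' => signed_rising p j * J (p + j) (q + 2 * j) a' b));
    [|apply (filter_imp (fun z => 0 < z)); [intros; apply Hb_n|apply locally_pos]; auto].
  rewrite Derive_n_scal_l, signed_rising_add, Rmult_assoc. f_equal. f_equal.
  rewrite (Nat.add_comm (p + j)).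
  apply (Derive_n_signed_rising (fun n a' => J (n + (p + j)) (q + 2 * j) a' b)); [|exact Ha].
  intros n y Hy. rewrite (Nat.add_comm (p + j)). apply is_derive_J_a; auto.
Qed.

Lemma RInt_01_of_derive (F f : R -> R) :
  (forall x, 0 <= x <= 1 -> is_derive F x (f x)) ->
  (forall x, 0 <= x <= 1 -> ex_derive f x) ->
  RInt f 0 1 = F 1 - F 0.
Proof.
  intros HF Hf. apply is_RInt_unique, (is_RInt_derive (V := R_CompleteNormedModule));
    intros x Hx; rewrite Rmin_left, Rmax_right in Hx by lra.
  - apply HF, Hx.
  - apply (ex_derive_continuous (K := R_AbsRing) (V := R_NormedModule)), Hf, Hx.
Qed.

Lemma J_1_0 a b : 0 < a -> 0 < b -> J 1 0 a b = X1 a b.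
Proof.
  intros Ha Hb. unfold J, X1.
  rewrite sqrt_div_alt, sqrt_mult by lra.
  assert (Hsa : 0 < sqrt a) by (apply sqrt_lt_R0; auto).
  assert (Hsb : 0 < sqrt b) by (apply sqrt_lt_R0; auto).
  assert (Ea : a = sqrt a * sqrt a) by (rewrite sqrt_sqrt; lra).
  assert (Eb : b = sqrt b * sqrt b) by (rewrite sqrt_sqrt; lra).
  set (sa := sqrt a) in *. set (sb := sqrt b) in *.
  rewrite (RInt_01_of_derive (fun t => atan (t * (sb / sa)) / (sa * sb))).
  - rewrite Rmult_0_l, atan_0, Rmult_1_l. unfold Rdiv. ring.
  - intros t _. pose proof (pow2_ge_0 t). auto_derive; [exact I|].
    rewrite Ea, Eb. simpl. field. split; [nra|lra].
  - intros t _. pose proof (pow2_ge_0 t). auto_derive. nra.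
Qed.

Lemma J_2_1 a b : 0 < a -> 0 < b -> J 2 1 a b = X2 a b.
Proof.
  intros Ha Hb. unfold J, X2.
  rewrite (RInt_01_of_derive (fun t => - / (2 * b * (a + b * t ^ 2)))).
  - simpl. field. lra.
  - intros t _. pose proof (pow2_ge_0 t). auto_derive; [nra|].
    simpl. field. split; [nra|lra].
  - intros t _. assert (0 < a + b * (t * t)) by nra. auto_derive. rewrite !Rmult_1_r. nra.
Qed.

Definition K (n : nat) (a b : R) : R := J (S n) n a b.

Lemma K_rec n a b : 0 < a -> 0 < b ->
  2 ^ 2 * a * b * INR (n + 2) * K (n + 2) a b = INR (n + 1) * K n a b + (b - a) / (a + b) ^ (n + 2).
Proof.
  intros Ha Hb.
  assert (HP : forall t, 0 < a + b * t ^ 2) by (intros t; pose proof (pow2_ge_0 t); nra).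
  assert (HI : RInt (fun t => 2 ^ 2 * a * b * INR (n + 2) * (t ^ (n + 2) / (a + b * t ^ 2) ^ S (n + 2))
                              - INR (n + 1) * (t ^ n / (a + b * t ^ 2) ^ S n)) 0 1
               = (b - a) / (a + b) ^ (n + 2)).
  { rewrite (RInt_01_of_derive (fun t => - (t ^ (n + 1) * (a - b * t ^ 2) / (a + b * t ^ 2) ^ (n + 2)))).
    - change (?x = ?y) with (x = y :> R).
      rewrite !pow1, (pow_i (n + 1)) by lia. rewrite Rmult_1_r.
      field. split; apply pow_nonzero; [lra|apply Rgt_not_eq, HP].
    - intros t _. specialize (HP t). auto_derive; [apply pow_nonzero; lra|].
      replace (Init.Nat.pred (n + 1)) with n by lia.
      replace (Init.Nat.pred (n + 2)) with (n + 1)%nat by lia.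
      replace (S (n + 1)) with (n + 2)%nat by lia.
      rewrite !plus_INR. simpl. rewrite !pow_add. simpl.
      field. split; [apply pow_nonzero|]; simpl in HP; lra.
    - intros t _. specialize (HP t). auto_derive.
      rewrite !tech_pow_Rmult. simpl in HP. repeat split; apply pow_nonzero; lra. }
  rewrite (RInt_minus (V := R_CompleteNormedModule)), !RInt_scal_J_integrand in HI by
    (auto; apply (ex_RInt_scal (V := R_CompleteNormedModule)), ex_RInt_J_integrand; auto).
  change (minus ?x ?y) with (x - y) in HI. unfold K. lra.
Qed.

Lemma partial_ab_K (g : R -> R -> R) p m a b : 0 < a -> 0 < b ->
  (forall a' b', 0 < a' -> 0 < b' -> g a' b' = K p a' b') ->
  INR (fact p) * partial_ab m m g a b = INR (fact (p + 2 * m)) * K (p + 2 * m) a b.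
Proof.
  intros Ha Hb Hg. rewrite (partial_ab_J g (S p) p) by auto.
  rewrite <- Rmult_assoc, fact_signed_rising.
  replace (m + m)%nat with (2 * m)%nat by lia. rewrite pow_1_even, Rmult_1_l.
  unfold K. do 2 f_equal; lia.
Qed.

Lemma Xn_odd_K m a b : 0 < a -> 0 < b -> Xn (S (2 * m)) a b = INR (fact (2 * m)) * K (2 * m) a b.
Proof.
  intros Ha Hb.
  rewrite <- (partial_ab_K X1 0 m) by (auto; intros; symmetry; apply J_1_0; auto).
  unfold Xn. rewrite Nat.odd_succ, Nat.even_mul. simpl Nat.odd.
  replace (S (2 * m) - 1)%nat with (m * 2)%nat by lia. rewrite Nat.div_mul by lia.
  simpl. ring.
Qed.

Lemma Xn_even_K m a b : 0 < a -> 0 < b ->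
  Xn (S (S (2 * m))) a b = INR (fact (S (2 * m))) * K (S (2 * m)) a b.
Proof.
  intros Ha Hb.
  rewrite <- (partial_ab_K X2 1 m) by (auto; intros; symmetry; apply J_2_1; auto).
  unfold Xn. rewrite Nat.odd_succ, Nat.even_succ, Nat.odd_mul. simpl Nat.odd.
  replace (S (S (2 * m)) - 2)%nat with (m * 2)%nat by lia. rewrite Nat.div_mul by lia.
  simpl. ring.
Qed.

Lemma dfact_nat_pos n : (0 < dfact_nat n)%nat.
Proof.
  induction n as [n IH] using lt_wf_ind.
  destruct n as [|[|n]]; simpl; try lia.
  specialize (IH n ltac:(lia)). lia.
Qed.

Lemma dfact_pos z : 0 < dfact z.
Proof. unfold dfact. destruct (z <? 0)%Z; [lra|]. apply lt_0_INR, dfact_nat_pos. Qed.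

Lemma dfact_succ2 z : (-1 <= z)%Z -> dfact (z + 2) = IZR (z + 2) * dfact z.
Proof.
  intros Hz. unfold dfact.
  destruct (Z.eq_dec z (-1)) as [->|Hne]; [simpl; ring|].
  rewrite (proj2 (Z.ltb_ge (z + 2) 0)), (proj2 (Z.ltb_ge z 0)) by lia.
  replace (Z.to_nat (z + 2)) with (S (S (Z.to_nat z))) by lia.
  change (dfact_nat (S (S ?k))) with (S (S k) * dfact_nat k)%nat.
  rewrite mult_INR, INR_IZR_INZ. do 2 f_equal. lia.
Qed.

Lemma K_closed n0 j a b : 0 < a -> 0 < b ->
  K (n0 + 2 * j) a b =
    dfact (Z.of_nat n0 + 2 * Z.of_nat j - 1)
      / (dfact (Z.of_nat n0 + 2 * Z.of_nat j) * (2 ^ 2 * a * b) ^ j)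
    * (dfact (Z.of_nat n0) / dfact (Z.of_nat n0 - 1) * K n0 a b
       + sum_n_m (fun k => dfact (Z.of_nat n0 + 2 * Z.of_nat k - 2) * (b - a) * (2 ^ 2 * a * b) ^ (k - 1)
                           / (dfact (Z.of_nat n0 + 2 * Z.of_nat k - 1) * (a + b) ^ (n0 + 2 * k))) 1 j).
Proof.
  intros Ha Hb. assert (HQ : 0 < 2 ^ 2 * a * b) by (simpl; nra).
  pose proof (dfact_pos (Z.of_nat n0 - 1)). pose proof (dfact_pos (Z.of_nat n0)).
  induction j as [|j IH].
  - rewrite sum_n_m_zero by lia. simpl. rewrite Nat.add_0_r, Z.add_0_r.
    change (zero : R) with 0. field. lra.
  - rewrite sum_n_Sm by lia. change (plus ?u ?v) with (u + v).
    set (n := (n0 + 2 * j)%nat) in *. set (z := (Z.of_nat n0 + 2 * Z.of_nat j)%Z) in *.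
    set (Q := 2 ^ 2 * a * b) in *.
    assert (Hzn : IZR z = INR n) by (rewrite INR_IZR_INZ; f_equal; lia).
    replace (n0 + 2 * S j)%nat with (n + 2)%nat by lia.
    replace (Z.of_nat n0 + 2 * Z.of_nat (S j) - 2)%Z with z by lia.
    replace (Z.of_nat n0 + 2 * Z.of_nat (S j) - 1)%Z with (z - 1 + 2)%Z by lia.
    replace (Z.of_nat n0 + 2 * Z.of_nat (S j))%Z with (z + 2)%Z by lia.
    replace (S j - 1)%nat with j by lia.
    rewrite !dfact_succ2 by lia. rewrite !plus_IZR, minus_IZR, Hzn.
    pose proof (dfact_pos (z - 1)). pose proof (dfact_pos z).
    pose proof (pos_INR n). pose proof (pow_lt _ j HQ). pose proof (pow_lt (a + b) (n + 2) ltac:(lra)).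
    replace (K (n + 2) a b)
      with ((INR (n + 1) * K n a b + (b - a) / (a + b) ^ (n + 2)) / (Q * INR (n + 2)))
      by (rewrite <- K_rec by auto; fold Q; field; rewrite plus_INR; simpl; split; lra).
    rewrite IH, !plus_INR. change (Q ^ S j) with (Q * Q ^ j). simpl (INR 1); simpl (INR 2).
    field. repeat split; nra.
Qed.

Lemma K_closed_even m a b : (1 <= m)%nat -> 0 < a -> 0 < b ->
  K (2 * m - 2) a b =
    dfact (2 * Z.of_nat m - 3) / (dfact (2 * Z.of_nat m - 2) * (2 ^ 2 * a * b) ^ (m - 1))
    * (X1 a b
       + sum_n_m (fun k => dfact (2 * Z.of_nat k - 2) * (b - a) * (2 ^ 2 * a * b) ^ (k - 1)
                           / (dfact (2 * Z.of_nat k - 1) * (a + b) ^ (2 * k))) 1 (m - 1)).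
Proof.
  intros Hm Ha Hb. destruct m as [|j]; [lia|].
  replace (2 * S j - 2)%nat with (0 + 2 * j)%nat by lia.
  replace (S j - 1)%nat with j by lia.
  replace (2 * Z.of_nat (S j) - 3)%Z with (Z.of_nat 0 + 2 * Z.of_nat j - 1)%Z by lia.
  replace (2 * Z.of_nat (S j) - 2)%Z with (Z.of_nat 0 + 2 * Z.of_nat j)%Z by lia.
  rewrite K_closed by auto. unfold K. rewrite J_1_0 by auto.
  change (dfact (Z.of_nat 0) / dfact (Z.of_nat 0 - 1)) with (1 / 1).
  rewrite Rdiv_1, Rmult_1_l. reflexivity.
Qed.

Lemma K_closed_odd m a b : (2 <= m)%nat -> 0 < a -> 0 < b ->
  K (2 * m - 3) a b =
    dfact (2 * Z.of_nat m - 4) / (dfact (2 * Z.of_nat m - 3) * (2 ^ 2 * a * b) ^ (m - 2))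
    * (X2 a b
       + sum_n_m (fun k => dfact (2 * Z.of_nat k - 3) * (b - a) * (2 ^ 2 * a * b) ^ (k - 2)
                           / (dfact (2 * Z.of_nat k - 2) * (a + b) ^ (2 * k - 1))) 2 (m - 1)).
Proof.
  intros Hm Ha Hb. destruct m as [|[|j]]; [lia|lia|].
  replace (2 * S (S j) - 3)%nat with (1 + 2 * j)%nat by lia.
  replace (S (S j) - 2)%nat with j by lia.
  replace (S (S j) - 1)%nat with (S j) by lia.
  replace (2 * Z.of_nat (S (S j)) - 4)%Z with (Z.of_nat 1 + 2 * Z.of_nat j - 1)%Z by lia.
  replace (2 * Z.of_nat (S (S j)) - 3)%Z with (Z.of_nat 1 + 2 * Z.of_nat j)%Z by lia.
  rewrite K_closed by auto. unfold K. rewrite J_2_1 by auto.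
  change (dfact (Z.of_nat 1) / dfact (Z.of_nat 1 - 1)) with (1 / 1).
  rewrite Rdiv_1, Rmult_1_l, <- sum_n_m_S. do 2 f_equal.
  apply sum_n_m_ext. intros k.
  replace (2 * Z.of_nat (S k) - 3)%Z with (Z.of_nat 1 + 2 * Z.of_nat k - 2)%Z by lia.
  replace (2 * Z.of_nat (S k) - 2)%Z with (Z.of_nat 1 + 2 * Z.of_nat k - 1)%Z by lia.
  replace (S k - 2)%nat with (k - 1)%nat by lia.
  replace (2 * S k - 1)%nat with (1 + 2 * k)%nat by lia.
  reflexivity.
Qed.

Lemma Xn_odd_closed m a b : (1 <= m)%nat -> 0 < a -> 0 < b ->
  Xn (2 * m - 1) a b =
    INR (fact (2 * m - 2)) * dfact (2 * Z.of_nat m - 3)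
      / (dfact (2 * Z.of_nat m - 2) * (2 ^ 2 * a * b) ^ (m - 1))
    * (atan (sqrt (b / a)) / sqrt (a * b)
       + sum_n_m (fun k => dfact (2 * Z.of_nat k - 2) * (b - a) * (2 ^ 2 * a * b) ^ (k - 1)
                           / (dfact (2 * Z.of_nat k - 1) * (a + b) ^ (2 * k))) 1 (m - 1)).
Proof.
  intros Hm Ha Hb.
  replace (2 * m - 1)%nat with (S (2 * (m - 1))) by lia.
  rewrite Xn_odd_K by auto. replace (2 * (m - 1))%nat with (2 * m - 2)%nat by lia.
  rewrite K_closed_even by auto. unfold X1, Rdiv. ring.
Qed.

Lemma Xn_even_closed m a b : (2 <= m)%nat -> 0 < a -> 0 < b ->
  Xn (2 * m - 2) a b =
    INR (fact (2 * m - 3)) * dfact (2 * Z.of_nat m - 4)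
      / (dfact (2 * Z.of_nat m - 3) * (2 ^ 2 * a * b) ^ (m - 2))
    * (1 / (2 * a * (a + b))
       + sum_n_m (fun k => dfact (2 * Z.of_nat k - 3) * (b - a) * (2 ^ 2 * a * b) ^ (k - 2)
                           / (dfact (2 * Z.of_nat k - 2) * (a + b) ^ (2 * k - 1))) 2 (m - 1)).
Proof.
  intros Hm Ha Hb.
  replace (2 * m - 2)%nat with (S (S (2 * (m - 2)))) by lia.
  rewrite Xn_even_K by auto. replace (S (2 * (m - 2)))%nat with (2 * m - 3)%nat by lia.
  rewrite K_closed_odd by auto. unfold X2, Rdiv. ring.
Qed.

Lemma f_int_K n r x : Rabs x < r -> f_int (S n) r x = 2 ^ S n * K n (r - x) (r + x).
Proof.
  intros Hr. apply Rabs_def2 in Hr. unfold f_int, K.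
  rewrite <- RInt_scal_J_integrand by lra. apply RInt_ext. intros t _.
  replace (S n - 1)%nat with n by lia.
  rewrite (Rmult_comm (t ^ 2)). unfold Rdiv. change (?l = ?w) with (l = w :> R). ring.
Qed.

Lemma sum_n_m_subst_rx (u v : nat -> R) (p q s : nat -> nat) c e lo hi r x :
  Rabs x < r -> (forall k, v k <> 0) ->
  (forall k, (lo <= k <= hi)%nat -> s k = (2 * p k + c + 1)%nat /\ q k = (p k + e)%nat) ->
  sum_n_m (fun k => u k * (r + x - (r - x)) * (2 ^ 2 * (r - x) * (r + x)) ^ p k
                    / (v k * (r - x + (r + x)) ^ s k)) lo hi
  = / (2 ^ c * (r ^ 2 - x ^ 2) ^ e)
    * sum_n_m (fun k => u k * x * (r ^ 2 - x ^ 2) ^ q k / (v k * r ^ s k)) lo hi.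
Proof.
  intros Hr Hv Hsq. apply Rabs_def2 in Hr.
  rewrite <- (sum_n_m_mult_l (K := R_Ring)). apply sum_n_m_ext_loc. intros k Hk.
  destruct (Hsq k Hk) as [-> ->]. change (?l = mult ?u ?w) with (l = u * w :> R).
  replace (r + x - (r - x)) with (2 * x) by ring.
  replace (2 ^ 2 * (r - x) * (r + x)) with ((2 ^ 2) * (r ^ 2 - x ^ 2)) by ring.
  replace (r - x + (r + x)) with (2 * r) by ring.
  rewrite !Rpow_mult_distr, !pow_add, !pow_1, <- pow_mult.
  assert (HR : 0 < r ^ 2 - x ^ 2) by nra.
  pose proof (pow_lt 2 c ltac:(lra)). pose proof (pow_lt 2 (2 * p k) ltac:(lra)).
  pose proof (pow_lt r (2 * p k) ltac:(lra)). pose proof (pow_lt r c ltac:(lra)).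
  pose proof (pow_lt _ e HR).
  field. specialize (Hv k). repeat split; lra.
Qed.

Lemma f_int_odd_closed m r x : (1 <= m)%nat -> Rabs x < r ->
  f_int (2 * m - 1) r x =
    dfact (2 * Z.of_nat m - 3) / (dfact (2 * Z.of_nat m - 2) * (r ^ 2 - x ^ 2) ^ (m - 1))
    * (2 * atan (sqrt ((r + x) / (r - x))) / sqrt (r ^ 2 - x ^ 2)
       + sum_n_m (fun k => dfact (2 * Z.of_nat k - 2) * x * (r ^ 2 - x ^ 2) ^ (k - 1)
                           / (dfact (2 * Z.of_nat k - 1) * r ^ (2 * k))) 1 (m - 1)).
Proof.
  intros Hm Hr. pose proof (Rabs_def2 _ _ Hr) as [H1 H2].
  replace (2 * m - 1)%nat with (S (2 * m - 2)) by lia.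
  rewrite f_int_K, K_closed_even by (auto; lra).
  rewrite (sum_n_m_subst_rx _ _ (fun k => k - 1)%nat (fun k => k - 1)%nat (fun k => 2 * k)%nat 1 0);
    [| exact Hr | intros; apply Rgt_not_eq, dfact_pos | intros; lia].
  unfold X1. replace ((r - x) * (r + x)) with (r ^ 2 - x ^ 2) by ring.
  replace (2 ^ 2 * (r - x) * (r + x)) with (2 ^ 2 * (r ^ 2 - x ^ 2)) by ring.
  replace (2 ^ S (2 * m - 2)) with (2 * (2 ^ 2) ^ (m - 1)) by
    (rewrite <- pow_mult, <- tech_pow_Rmult; do 2 f_equal; lia).
  rewrite Rpow_mult_distr.
  assert (HR : 0 < r ^ 2 - x ^ 2) by nra.
  pose proof (dfact_pos (2 * Z.of_nat m - 2)). pose proof (sqrt_lt_R0 _ HR).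
  pose proof (pow_lt _ (m - 1) HR). pose proof (pow_lt (2 ^ 2) (m - 1) ltac:(lra)).
  field. repeat split; lra.
Qed.

Lemma f_int_even_closed m r x : (2 <= m)%nat -> Rabs x < r ->
  f_int (2 * m - 2) r x =
    dfact (2 * Z.of_nat m - 4) / (dfact (2 * Z.of_nat m - 3) * (r ^ 2 - x ^ 2) ^ (m - 1))
    * (1 + sum_n_m (fun k => dfact (2 * Z.of_nat k - 3) * x * (r ^ 2 - x ^ 2) ^ (k - 1)
                             / (dfact (2 * Z.of_nat k - 2) * r ^ (2 * k - 1))) 1 (m - 1)).
Proof.
  intros Hm Hr. pose proof (Rabs_def2 _ _ Hr) as [H1 H2].
  replace (2 * m - 2)%nat with (S (2 * m - 3)) by lia.
  rewrite f_int_K, K_closed_odd by (auto; lra).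
  rewrite (sum_n_m_subst_rx _ _ (fun k => k - 2)%nat (fun k => k - 1)%nat (fun k => 2 * k - 1)%nat 2 1);
    [| exact Hr | intros; apply Rgt_not_eq, dfact_pos | intros; lia].
  rewrite (sum_Sn_m _ 1) by lia. change (plus ?u ?w) with (u + w). cbv beta.
  change (dfact (2 * Z.of_nat 1 - 3)) with 1. change (dfact (2 * Z.of_nat 1 - 2)) with 1.
  unfold X2. replace (2 ^ 2 * (r - x) * (r + x)) with (2 ^ 2 * (r ^ 2 - x ^ 2)) by ring.
  change (1 - 1)%nat with 0%nat. change (2 * 1 - 1)%nat with 1%nat. rewrite pow_O, pow_1.
  replace (2 ^ S (2 * m - 3)) with (2 ^ 2 * (2 ^ 2) ^ (m - 2)) by
    (rewrite <- pow_mult, <- pow_add; f_equal; lia).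
  replace (m - 1)%nat with (S (m - 2)) by lia.
  rewrite <- (tech_pow_Rmult (r ^ 2 - x ^ 2)), Rpow_mult_distr.
  assert (HR : 0 < r ^ 2 - x ^ 2) by nra.
  pose proof (dfact_pos (2 * Z.of_nat m - 3)).
  pose proof (pow_lt _ (m - 2) HR). pose proof (pow_lt (2 ^ 2) (m - 2) ltac:(lra)).
  field. repeat split; nra.
Qed.

Theorem mainTheorem2 :
  (* closed form of X_n, n = 2m-1 *)
  (forall (m : nat) (a b : R), (1 <= m)%nat -> 0 < a -> 0 < b ->
     Xn (2 * m - 1) a b =
       INR (fact (2 * m - 2)) * dfact (2 * Z.of_nat m - 3)
         / (dfact (2 * Z.of_nat m - 2) * (2 ^ 2 * a * b) ^ (m - 1))
       * (atan (sqrt (b / a)) / sqrt (a * b)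
          + sum_n_m (fun k => dfact (2 * Z.of_nat k - 2) * (b - a) * (2 ^ 2 * a * b) ^ (k - 1)
                              / (dfact (2 * Z.of_nat k - 1) * (a + b) ^ (2 * k)))
              1 (m - 1))) /\
  (* closed form of X_n, n = 2m-2 *)
  (forall (m : nat) (a b : R), (2 <= m)%nat -> 0 < a -> 0 < b ->
     Xn (2 * m - 2) a b =
       INR (fact (2 * m - 3)) * dfact (2 * Z.of_nat m - 4)
         / (dfact (2 * Z.of_nat m - 3) * (2 ^ 2 * a * b) ^ (m - 2))
       * (1 / (2 * a * (a + b))
          + sum_n_m (fun k => dfact (2 * Z.of_nat k - 3) * (b - a) * (2 ^ 2 * a * b) ^ (k - 2)
                              / (dfact (2 * Z.of_nat k - 2) * (a + b) ^ (2 * k - 1)))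
              2 (m - 1))) /\
  (* f for n = 2m-1; x = (x_0,...,x_n) 0-indexed, so x_{n+1} of the paper is x n *)
  (forall (m : nat) (x : nat -> R) (r : R), (1 <= m)%nat ->
     let n := (2 * m - 1)%nat in
     r = sqrt (sum_n (fun j => x j ^ 2) n) -> Rabs (x n) < r ->
     f_int n r (x n) =
       dfact (2 * Z.of_nat m - 3)
         / (dfact (2 * Z.of_nat m - 2) * (r ^ 2 - x n ^ 2) ^ (m - 1))
       * (2 * atan (sqrt ((r + x n) / (r - x n))) / sqrt (r ^ 2 - x n ^ 2)
          + sum_n_m (fun k => dfact (2 * Z.of_nat k - 2) * x n * (r ^ 2 - x n ^ 2) ^ (k - 1)
                              / (dfact (2 * Z.of_nat k - 1) * r ^ (2 * k)))
              1 (m - 1))) /\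
  (* f for n = 2m-2 *)
  (forall (m : nat) (x : nat -> R) (r : R), (2 <= m)%nat ->
     let n := (2 * m - 2)%nat in
     r = sqrt (sum_n (fun j => x j ^ 2) n) -> Rabs (x n) < r ->
     f_int n r (x n) =
       dfact (2 * Z.of_nat m - 4)
         / (dfact (2 * Z.of_nat m - 3) * (r ^ 2 - x n ^ 2) ^ (m - 1))
       * (1
          + sum_n_m (fun k => dfact (2 * Z.of_nat k - 3) * x n * (r ^ 2 - x n ^ 2) ^ (k - 1)
                              / (dfact (2 * Z.of_nat k - 2) * r ^ (2 * k - 1)))
              1 (m - 1))).
Proof.
  split; [|split; [|split]].
  - exact Xn_odd_closed.
  - exact Xn_even_closed.
  - intros m x r Hm n _ Hr. exact (f_int_odd_closed m r (x n) Hm Hr).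
  - intros m x r Hm n _ Hr. exact (f_int_even_closed m r (x n) Hm Hr).
Qed.
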